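(* Let $k\ge 2$. Suppose that $1/\epsilon\le\binom{d/2}{k-1}$ and $\delta<1/3$. Then for $n\ge 1/\epsilon$, the space complexity of any valid For-Each-Itemset-Frequency-Indicator sketch satisfies $|\mathcal{S}(n,d,k,\epsilon,\delta)|=\Omega(d/\epsilon)$.
   Context: A database is $\mathcal{D}\in(\{0,1\}^d)^n$ ($n$ rows, $d$ binary columns). An itemset is $T\subseteq[d]$; a $k$-itemset has $|T|=k$. A row contains $T$ if it has a 1 in every column of $T$; $f_T(\mathcal{D})$ is the fraction of rows containing $T$. A For-Each-Itemset-Frequency-Indicator sketch is a pair $(\mathcal{S},\mathcal{Q})$ where $\mathcal{S}$ is a randomized algorithm mapping $(\mathcal{D},k,\epsilon,\delta)$ to a bit string (summary) and $\mathcal{Q}$ is a deterministic procedure mapping a summary and a $k$-itemset $T$ to a bit, such that for every database $\mathcal{D}$ and every single $k$-itemset $T$: if $f_T>\epsilon$ then $\mathcal{Q}(\mathcal{S}(\mathcal{D},k,\epsilon,\delta),T)=1$ with probability at least $1-\delta$, and if $f_T<\epsilon/2$ then it equals 0 with probability at least $1-\delta$. The space complexity $|\mathcal{S}(n,d,k,\epsilon,\delta)|$ is the maximum length in bits of the summary over all $\mathcal{D}\in(\{0,1\}^d)^n$. *)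

From mathcomp Require Import all_boot all_order all_algebra.
Set Implicit Arguments. Unset Strict Implicit. Unset Printing Implicit Defensive.
Import Order.TTheory GRing.Theory Num.Theory.
Local Open Scope ring_scope.

Definition database (n d : nat) := {ffun 'I_n -> {ffun 'I_d -> bool}}.

Definition row_contains n d (D : database n d) (i : 'I_n) (T : {set 'I_d}) : bool :=
  [forall j in T, D i j].

Definition freq (R : realFieldType) n d (D : database n d) (T : {set 'I_d}) : R :=
  (#|[set i | row_contains D i T]|%:R) / (n%:R).

(* All bit strings of length at most L (each exactly once). *)
Fixpoint strs (L : nat) : seq (seq bool) :=
  if L is L'.+1 then
    [::] :: [seq b :: s | b <- [:: false; true], s <- strs L']
  else [:: [::]].

(* A randomized summary algorithm, at fixed parameters (n,d,k,eps,delta), is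
   described by the output distribution mu D of summaries for every database D.
   [summary_dist L mu]: each mu D is a probability distribution on bit strings,
   and every summary produced with positive probability has length <= L
   (i.e. the space complexity is at most L). *)
Definition summary_dist (R : realFieldType) n d (L : nat)
    (mu : database n d -> seq bool -> R) : Prop :=
  forall D : database n d,
    (forall s, 0 <= mu D s) /\
    (forall s, mu D s != 0 -> (size s <= L)%N) /\
    \sum_(s <- strs L) mu D s = 1.

Definition prob_answer (R : realFieldType) n d (L : nat)
    (mu : database n d -> seq bool -> R) (Q : seq bool -> {set 'I_d} -> bool)
    (D : database n d) (T : {set 'I_d}) (b : bool) : R :=
  \sum_(s <- strs L) mu D s * (Q s T == b)%:R.

Definition valid_FEIFI (R : realFieldType) n d (k : nat) (eps delta : R) (L : nat)
    (mu : database n d -> seq bool -> R) (Q : seq bool -> {set 'I_d} -> bool) : Prop :=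
  summary_dist L mu /\
  forall (D : database n d) (T : {set 'I_d}), #|T| = k ->
    (eps < freq R D T -> 1 - delta <= prob_answer L mu Q D T true) /\
    (freq R D T < eps / 2%:R -> 1 - delta <= prob_answer L mu Q D T false).

From mathcomp Require Import all_boot all_order all_algebra.
From mathcomp Require Import zify lra.
Import Order.TTheory GRing.Theory Num.Theory.

Set Implicit Arguments.
Unset Strict Implicit.
Unset Printing Implicit Defensive.

(* Take g ~ 1/(2 eps) distinct (k-1)-subsets S_i of the first d/2 columns and cut the
   rows into g blocks of n/g > eps n rows.  Encode x : {0,1}^(g x d/2) as the database
   whose block-i rows contain S_i, plus column d/2 + b whenever x(i,b) = 1: the itemset
   S_i + {d/2 + b} then has frequency > eps if x(i,b) = 1 and 0 otherwise.  A valid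
   sketch therefore recovers each of the m = g d/2 = Omega(d/eps) bits of x with
   probability >= 2/3 from a summary of at most L bits.  By averaging, for every x
   some summary decodes to a string agreeing with x on more than 2m/3 coordinates;
   a fixed string has at most 3^m / 2^(2m/3) such neighbours, so
   2^m <= 4^L 3^m / 2^(2m/3), which forces m < 30 L. *)

Lemma size_strs L : (size (strs L) <= 4 ^ L)%N.
Proof.
elim: L => [|L IH] //=.
rewrite size_cat !size_map size_cat size_map expnS /=; lia.
Qed.

Definition agreement (I : finType) (y x : {ffun I -> bool}) : nat :=
  #|[pred i | y i == x i]|.

(* Each coordinate contributes 2 to the product when it agrees with [y] and 1 otherwise. *)
Lemma sum_exp2_agreement (I : finType) (y : {ffun I -> bool}) :
  (\sum_(x : {ffun I -> bool}) 2 ^ agreement y x = 3 ^ #|I|)%N.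
Proof.
have -> : (3 ^ #|I| = \prod_(i : I) \sum_(b : bool) (if y i == b then 2 else 1))%N.
  rewrite -prod_nat_const; apply: eq_bigr => i _.
  by rewrite big_bool /=; case: (y i).
rewrite bigA_distr_bigA /=; apply: eq_bigr => x _.
by rewrite -prod_nat_const big_mkcond.
Qed.

Lemma card_agreeing_mul_exp2 (I : finType) (y : {ffun I -> bool}) e :
  (#|[pred x | e <= agreement y x]| * 2 ^ e <= 3 ^ #|I|)%N.
Proof.
rewrite -sum_nat_const -(sum_exp2_agreement y).
rewrite [X in (_ <= X)%N](bigID [pred x | e <= agreement y x]) /=.
apply: leq_trans (leq_addr _ _); apply: leq_sum => x; rewrite inE => hx.
exact: leq_pexp2l.
Qed.

(* [27 ^ 5 <= 2 ^ 24] gives [3 ^ 3 < 2 ^ 4.8], which is what makes the constant 30 work. *)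
Lemma exp27_le_exp2 m : (27 ^ m <= 2 ^ (24 * (m %/ 5) + 5 * (m %% 5)))%N.
Proof.
have -> : (27 ^ m = (27 ^ 5) ^ (m %/ 5) * 27 ^ (m %% 5))%N.
  by rewrite -expnM -expnD mulnC -divn_eq.
rewrite expnD !expnM.
have pow_mono a b e : (a <= b -> a ^ e <= b ^ e)%N.
  by move=> hab; elim: e => // e IH; rewrite !expnS leq_mul.
by apply: leq_mul; apply: pow_mono; lia.
Qed.

Lemma counting_bound m e L :
  (2 ^ m * 2 ^ e <= 4 ^ L * 3 ^ m -> 2 * m < 3 * e -> m < 30 * L)%N.
Proof.
move=> hcount he.
rewrite -(leq_exp2r _ _ (ltn0Sn 2)) in hcount.
have hcube : (2 ^ ((m + e) * 3) <= 2 ^ (6 * L) * 27 ^ m)%N.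
  have -> : (2 ^ ((m + e) * 3) = (2 ^ m * 2 ^ e) ^ 3)%N by rewrite -expnD expnM.
  have -> : (2 ^ (6 * L) * 27 ^ m = (4 ^ L * 3 ^ m) ^ 3)%N.
    rewrite expnMn -!expnM -(expnM 2 2).
    by congr (_ * _); [congr (2 ^ _); lia | rewrite mulnC expnM].
  exact: hcount.
have := leq_trans hcube (leq_mul (leqnn _) (exp27_le_exp2 m)).
rewrite -expnD leq_exp2l // => hexp.
have := ltn_mod m 5; have := divn_eq m 5; lia.
Qed.

Local Open Scope ring_scope.

Lemma natr_card (R : realFieldType) (I : finType) (P : pred I) :
  (#|P|%:R : R) = \sum_i (P i)%:R.
Proof.
rewrite -sum1_card natr_sum big_mkcond /=; apply: eq_bigr => i _.
by rewrite unfold_in; case: (P i).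
Qed.

Section Decoding.

Variables (R : realFieldType) (I : finType) (L : nat) (delta : R).
Variable p : {ffun I -> bool} -> seq bool -> R.
Variable dec : seq bool -> I -> bool.

Hypothesis delta_lt : delta < 1 / 3%:R.
Hypothesis p_ge0 : forall x s, 0 <= p x s.
Hypothesis p_sum1 : forall x, \sum_(s <- strs L) p x s = 1.
Hypothesis dec_correct :
  forall x i, 1 - delta <= \sum_(s <- strs L) p x s * (dec s i == x i)%:R.

Let decoded (s : seq bool) : {ffun I -> bool} := [ffun i => dec s i].

Lemma expected_agreement x :
  #|I|%:R * (1 - delta) <= \sum_(s <- strs L) p x s * (agreement (decoded s) x)%:R.
Proof.
have -> : \sum_(s <- strs L) p x s * (agreement (decoded s) x)%:R =
          \sum_i \sum_(s <- strs L) p x s * (dec s i == x i)%:R.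
  rewrite exchange_big /=; apply: eq_bigr => s _.
  rewrite /agreement natr_card mulr_sumr; apply: eq_bigr => i _ /=.
  by rewrite ffunE.
rewrite -sum1_card natr_sum mulr_suml.
by apply: ler_sum => i _; rewrite mul1r.
Qed.

Lemma exists_majority_summary x : (0 < #|I|)%N ->
  has (fun s => (2 * #|I|) %/ 3 < agreement (decoded s) x)%N (strs L).
Proof.
move=> I_gt0; apply: contraT => /hasPn hminority.
have hupper : \sum_(s <- strs L) p x s * (agreement (decoded s) x)%:R
              <= (2 * #|I|)%N%:R / 3%:R.
  apply: (@le_trans _ _ (\sum_(s <- strs L) p x s * ((2 * #|I|)%N%:R / 3%:R))).
    rewrite big_seq_cond [X in _ <= X]big_seq_cond.
    apply: ler_sum => s /andP [hs _]; apply: ler_wpM2l => //.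
    have := hminority s hs; rewrite -leqNgt => hs_minority.
    rewrite ler_pdivlMr ?ltr0n // -natrM ler_nat; lia.
  by rewrite -mulr_suml p_sum1 mul1r.
rewrite natrM in hupper; have := expected_agreement x.
have : 0 < #|I|%:R * (1 / 3%:R - delta) :> R by rewrite mulr_gt0 ?ltr0n // subr_gt0.
lra.
Qed.

Lemma exp2_card_le e : (0 < #|I|)%N -> (e <= ((2 * #|I|) %/ 3).+1)%N ->
  (2 ^ #|I| * 2 ^ e <= size (strs L) * 3 ^ #|I|)%N.
Proof.
move=> I_gt0 e_le.
pose good s := [pred x | e <= agreement (decoded s) x]%N.
have hcover : (2 ^ #|I| <= \sum_(s <- strs L) #|good s|)%N.
  have -> : (2 ^ #|I| = #|{ffun I -> bool}|)%N by rewrite card_ffun card_bool.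
  rewrite -sum1_card.
  apply: (@leq_trans (\sum_x \sum_(s <- strs L | x \in good s) 1)).
    apply: leq_sum => x _; rewrite sum1_count -has_count.
    by apply: sub_has (exists_majority_summary x I_gt0) => s; rewrite inE; apply: leq_trans.
  under eq_bigr do rewrite big_mkcond.
  by rewrite exchange_big /=; apply: leq_sum => s _; rewrite -big_mkcond sum1_card.
apply: leq_trans (leq_mul hcover (leqnn _)) _.
rewrite big_distrl /= -[X in (_ <= X * _)%N]count_predT -sum1_count big_distrl /=.
by apply: leq_sum => s _; rewrite mul1n card_agreeing_mul_exp2.
Qed.

Lemma decoding_lower_bound : (0 < #|I|)%N -> (#|I| < 30 * L)%N.
Proof.
move=> I_gt0.
apply: (@counting_bound _ ((2 * #|I|) %/ 3).+1); last by lia.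
apply: leq_trans (exp2_card_le I_gt0 (leqnn _)) _.
by rewrite leq_mul2r size_strs orbT.
Qed.

End Decoding.

Section HardDatabase.

Variables (n d g h q m : nat).
Variable S : 'I_g -> {set 'I_d}.
Variable col : 'I_h -> 'I_d.

Hypothesis S_inj : injective S.
Hypothesis card_S : forall i, #|S i| = m.
Hypothesis col_inj : injective col.
Hypothesis col_notin_S : forall i b, col b \notin S i.

(* Rows are cut into consecutive blocks of [q] rows; a row of block [i < g] contains
   [S i] together with the columns [col b] of the bits [x (i, b)] that are set.
   Rows beyond the first [q * g] are empty. *)
Definition hard_db (x : {ffun 'I_g * 'I_h -> bool}) : database n d :=
  [ffun r : 'I_n => [ffun c : 'I_d => [exists i : 'I_g, ((r %/ q)%N == i) &&
     ((c \in S i) || [exists b : 'I_h, (c == col b) && x (i, b)])]]].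

Definition probe (ib : 'I_g * 'I_h) : {set 'I_d} := col ib.2 |: S ib.1.

Definition block (i : 'I_g) : {set 'I_n} := [set r : 'I_n | (r %/ q)%N == i].

Lemma S_subset_inj i j : S i \subset S j -> i = j.
Proof.
by move=> sub_ij; apply: S_inj; apply/eqP; rewrite eqEcard sub_ij !card_S leqnn.
Qed.

Lemma row_contains_probe x r i b :
  row_contains (hard_db x) r (probe (i, b)) = (r \in block i) && x (i, b).
Proof.
rewrite /row_contains inE; apply/forall_inP/andP => [in_row | [/eqP r_i x_ib] c].
- have /existsP [j /andP [/eqP r_j]] : [exists j : 'I_g, ((r %/ q)%N == j) &&
      ((col b \in S j) || [exists b', (col b == col b') && x (j, b')])].
    by have := in_row (col b); rewrite in_setU1 eqxx !ffunE; apply.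
  rewrite (negbTE (col_notin_S _ _)) /= => /existsP [b' /andP [/eqP /col_inj <- x_jb]].
  suff ij : i = j by rewrite ij r_j eqxx.
  apply: S_subset_inj; apply/subsetP => c c_Si.
  have := in_row c; rewrite in_setU1 c_Si orbT !ffunE => /(_ isT) /existsP [j'].
  case/andP => /eqP r_j' /orP [c_Sj' | /existsP [b'' /andP [/eqP c_col _]]].
    by have -> : j = j' by apply: val_inj; rewrite /= -r_j' r_j.
  by rewrite c_col (negbTE (col_notin_S _ _)) in c_Si.
- rewrite in_setU1 !ffunE => c_probe; apply/existsP; exists i; rewrite r_i eqxx /=.
  case/orP: c_probe => [/eqP -> | ->] //.
  by apply/orP; right; apply/existsP; exists b; rewrite eqxx x_ib.
Qed.

Lemma freq_probe (R : realFieldType) x i b :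
  freq R (hard_db x) (probe (i, b)) = (if x (i, b) then #|block i| else 0%N)%:R / n%:R.
Proof.
rewrite /freq; congr (_%:R / _); case x_ib: (x (i, b)).
- by apply: eq_card => r; rewrite inE row_contains_probe x_ib andbT.
- by apply: eq_card0 => r; rewrite inE row_contains_probe x_ib andbF.
Qed.

Lemma card_probe ib : #|probe ib| = m.+1.
Proof. by rewrite cardsU1 col_notin_S card_S. Qed.

Lemma block_size i : (q * g <= n)%N -> (q <= #|block i|)%N.
Proof.
move=> gq_le_n.
have row_lt t : (t < q -> i * q + t < n)%N.
  by move=> t_lt_q; have := ltn_ord i; nia.
pose row (t : 'I_q) : 'I_n := Ordinal (row_lt t (ltn_ord t)).
have row_inj : injective row by move=> t t' /(congr1 val) /addnI /val_inj.
rewrite -[X in (X <= _)%N]card_ord -(card_imset _ row_inj).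
apply/subset_leq_card/subsetP => _ /imsetP [t _ ->].
by rewrite inE /= divnMDl ?divn_small ?addn0 // (leq_ltn_trans _ (ltn_ord t)).
Qed.

Lemma valid_sketch_decodes_hard_db (R : realFieldType) (eps delta : R) L
    (mu : database n d -> seq bool -> R) (Q : seq bool -> {set 'I_d} -> bool) :
  (0 < g * h)%N -> (q * g <= n)%N -> 0 < eps -> eps * n%:R < q%:R ->
  delta < 1 / 3%:R -> valid_FEIFI m.+1 eps delta L mu Q ->
  (g * h < 30 * L)%N.
Proof.
move=> gh_gt0 gq_le_n eps_gt0 q_large delta_lt [mu_dist mu_valid].
have := @decoding_lower_bound R ('I_g * 'I_h)%type L delta (fun x => mu (hard_db x))
  (fun s ib => Q s (probe ib)).
rewrite card_prod !card_ord; apply=> //.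
- by move=> x; exact: (mu_dist (hard_db x)).1.
- by move=> x; exact: (mu_dist (hard_db x)).2.2.
move=> x [i b]; have [answer_true answer_false] := mu_valid (hard_db x) _ (card_probe (i, b)).
have q_gt0 : (0 < q)%N.
  by rewrite -(ltr0n R); apply: le_lt_trans q_large; rewrite mulr_ge0 // ltW.
have n_gt0 : (0 < n)%N by move: gh_gt0 q_gt0 gq_le_n; nia.
case x_ib: (x (i, b)).
- apply: answer_true; rewrite freq_probe x_ib ltr_pdivlMr ?ltr0n //.
  by apply: lt_le_trans q_large _; rewrite ler_nat block_size.
- by apply: answer_false; rewrite freq_probe x_ib mul0r divr_gt0 ?ltr0n.
Qed.

End HardDatabase.

Section BlockCount.

Variables (R : realFieldType) (eps : R).
Hypothesis eps_gt0 : 0 < eps.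
Hypothesis eps_lt1 : eps < 1.

(* [g] is [max(1, floor (1 / (2 eps)))], found as a maximum over naturals since [R]
   has no floor function. *)
Lemma exists_block_count C : eps^-1 <= C%:R ->
  exists g, [/\ (0 < g)%N, (g <= C)%N, eps^-1 <= (4 * g)%N%:R
              & g = 1%N \/ (2 * g)%N%:R * eps <= 1].
Proof.
move=> C_large.
have C_gt0 : (0 < C)%N by rewrite -(ltr0n R); apply: lt_le_trans C_large; rewrite invr_gt0.
pose fits j := (2 * j)%N%:R * eps <= 1.
have fits0 : fits 0%N by rewrite /fits mul0r ler01.
have fits_le_C j : fits j -> (j <= C)%N.
  rewrite /fits natrM => fits_j; rewrite -(ler_nat R); apply: le_trans C_large.
  by rewrite -div1r ler_pdivlMr //; have : 0 <= j%:R :> R by []; nra.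
have [g0 fits_g0 g0_max] := ex_maxnP (ex_intro fits 0%N fits0) fits_le_C.
have inv_lt : eps^-1 < (2 * g0.+1)%N%:R.
  by rewrite -div1r ltr_pdivrMr // ltNge; apply/negP => /g0_max; rewrite ltnn.
exists (maxn g0 1); split.
- by rewrite leq_max orbT.
- by rewrite geq_max fits_le_C.
- by apply: (le_trans (ltW inv_lt)); rewrite ler_nat; lia.
- by case: (posnP g0) => [-> | g0_gt0]; [left | right; rewrite (maxn_idPl _)].
Qed.

Lemma block_size_large g n : (0 < g)%N -> eps^-1 <= n%:R ->
  g = 1%N \/ (2 * g)%N%:R * eps <= 1 -> eps * n%:R < (n %/ g)%N%:R.
Proof.
move=> g_gt0 n_large [-> | fits_g].
  by rewrite divn1 gtr_pMl // (lt_le_trans _ n_large) // (lt_trans ltr01) ?invf_gt1.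
have two_g_le_n : (2 * g <= n)%N.
  rewrite -(ler_nat R); apply: le_trans n_large.
  by rewrite -div1r ler_pdivlMr.
have n_lt : (n < 2 * g * (n %/ g))%N.
  have := ltn_ceil n g_gt0; rewrite mulSn -mulnA (mulnC g).
  by move: two_g_le_n; lia.
rewrite -(ltr_nat R) in n_lt.
apply: (lt_le_trans (_ : _ < eps * (2 * g * (n %/ g))%N%:R)); first by rewrite ltr_pM2l.
by rewrite natrM mulrCA mulrA ler_piMl.
Qed.

End BlockCount.

Lemma widen_ord_inj m1 m2 (le_m12 : (m1 <= m2)%N) : injective (widen_ord le_m12).
Proof. by move=> a b /(congr1 val) /= /val_inj. Qed.

Lemma exists_uniform_family h d m g : (h <= d)%N -> (g <= 'C(h, m))%N ->
  exists S : 'I_g -> {set 'I_d},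
    [/\ injective S, forall i, #|S i| = m & forall i c, c \in S i -> (c < h)%N].
Proof.
move=> h_le_d g_le_C.
have g_le : (g <= #|[set A : {set 'I_h} | #|A| == m]|)%N by rewrite card_draws card_ord.
pose E i := enum_val (widen_ord g_le i).
exists (fun i => widen_ord h_le_d @: E i); split.
- move=> i j /(imset_inj (@widen_ord_inj _ _ h_le_d)) /enum_val_inj.
  exact: widen_ord_inj.
- move=> i; rewrite card_imset; last exact: widen_ord_inj.
  by have := enum_valP (widen_ord g_le i); rewrite inE => /eqP.
- by move=> i _ /imsetP [a _ ->] /=.
Qed.

Theorem theorem3 (R : realFieldType) :
  exists c : R, 0 < c /\
  forall (k d n : nat) (eps delta : R) (L : nat)
         (mu : database n d -> seq bool -> R)
         (Q : seq bool -> {set 'I_d} -> bool),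
    (2 <= k)%N ->
    0 < eps < 1 ->
    eps^-1 <= ('C(d./2, k.-1))%:R ->
    0 <= delta < 1 / 3%:R ->
    eps^-1 <= n%:R ->
    valid_FEIFI k eps delta L mu Q ->
    c * (d%:R / eps) <= L%:R.
Proof.
exists (1 / 360%:R); split; first by rewrite divr_gt0 ?ltr0n.
move=> k d n eps delta L mu Q k_ge2 /andP [eps_gt0 eps_lt1] C_large /andP [_ delta_lt]
  n_large valid.
set h := d./2.
have [g [g_gt0 g_le_C inv_eps_le g_fits]] := exists_block_count eps_gt0 eps_lt1 C_large.
have h_gt0 : (0 < h)%N.
  have : (0 < 'C(h, k.-1))%N by apply: leq_trans g_le_C.
  by rewrite bin_gt0; lia.
have [two_h_le_d d_le_three_h] : (2 * h <= d)%N /\ (d <= 3 * h)%N.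
  by rewrite /h; have := odd_double_half d; case: (odd d) => /=; lia.
have h_le_d : (h <= d)%N by lia.
have [S [S_inj card_S S_lt_h]] := exists_uniform_family h_le_d g_le_C.
have col_lt (b : 'I_h) : (h + b < d)%N by have := ltn_ord b; lia.
pose col b := Ordinal (col_lt b).
have col_inj : injective col by move=> b b' /(congr1 val) /addnI /val_inj.
have col_notin_S i b : col b \notin S i by apply/negP => /S_lt_h; rewrite ltnNge leq_addr.
rewrite -(prednK (leq_trans _ k_ge2)) // in valid.
have gh_gt0 : (0 < g * h)%N by rewrite muln_gt0 g_gt0.
have gh_lt := valid_sketch_decodes_hard_db S_inj card_S col_inj col_notin_S
  gh_gt0 (leq_divM n g) eps_gt0 (block_size_large eps_gt0 eps_lt1 g_gt0 n_large g_fits)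
  delta_lt valid.
have d_eps : d%:R / eps <= (3 * h)%N%:R * (4 * g)%N%:R.
  by apply: ler_pM; rewrite ?ler_nat // invr_ge0 ltW.
have : (3 * h)%N%:R * (4 * g)%N%:R <= 360%:R * L%:R :> R by rewrite -!natrM ler_nat; lia.
lra.
Qed.
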